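(* $\operatorname{conv}(M^\Lambda)=\operatorname{proj}_{(\lambda,w)}\bigl(\mathrm{RLT}_d(\Lambda)\bigr)=R$, where $$R=\Bigl\{(\lambda,w)\ \Bigm|\ w\ge0,\ \sum_{j\in E}w_j=1,\ \lambda_{ij_i}=\sum_{p\in E:\,p_i=j_i}w_p\ \text{ for }i\in[d],\ j\in E\Bigr\}.$$
   Context: Let $d,n$ be positive integers, $[d]=\{1,\dots,d\}$, $E=\{0,\dots,n\}^d$. $\Lambda_i=\{\lambda_i\in\mathbb{R}^{n+1}\mid\sum_{j=0}^n\lambda_{ij}=1,\lambda_i\ge0\}$, $\Lambda=\prod_{i=1}^d\Lambda_i$, and $M^\Lambda=\{(\lambda,w)\mid\lambda\in\Lambda,\ w_j=\prod_{i=1}^d\lambda_{ij_i}\text{ for }j\in E\}$. $\mathrm{RLT}_d(\Lambda)$ is the $d$-th level reformulation-linearization relaxation of $\Lambda$: for each $I\subseteq[d]$ and map $j:I\to\{0,\dots,n\}$ introduce a variable $y_{(I,j)}$ linearizing $\prod_{i\in I}\lambda_{ij(i)}$, with $y_{(\emptyset,\cdot)}=1$, $y_{(\{i\},j)}=\lambda_{ij(i)}$ and $w_j=y_{([d],j)}$ for $j\in E$. The constraints are the linearizations of the products $\prod_{i\in I}\lambda_{ij(i)}\cdot\prod_{i\notin I}(1-\sum_{k=0}^n\lambda_{ik})$ of one constraint factor per block: $y_{([d],j)}\ge0$ for all $j\in E$, and for every proper subset $I\subsetneq[d]$ and $j:I\to\{0,\dots,n\}$, $\sum_{I\subseteq I'\subseteq[d]}(-1)^{|I'\setminus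 I|}\sum_{j':I'\to\{0,\dots,n\},\ j'|_I=j}y_{(I',j')}=0$. *)

From mathcomp Require Import all_boot all_order all_algebra.
Set Implicit Arguments. Unset Strict Implicit. Unset Printing Implicit Defensive.
Import Order.TTheory GRing.Theory Num.Theory.
Local Open Scope ring_scope.

Section RLT.
Variables (R : realFieldType) (d n : nat).

(* Blocks [d] are indexed by 'I_d (0-based), entries {0..n} by 'I_n.+1. *)
Definition Eidx := {ffun 'I_d -> 'I_n.+1}.

Definition point := (('I_d -> 'I_n.+1 -> R) * (Eidx -> R))%type.

Definition in_Lambda (lam : 'I_d -> 'I_n.+1 -> R) : Prop :=
  forall i : 'I_d, (forall j, 0 <= lam i j) /\ \sum_(j < n.+1) lam i j = 1.

Definition MLambda (x : point) : Prop :=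
  in_Lambda x.1 /\ forall j : Eidx, x.2 j = \prod_(i < d) x.1 i (j i).

Definition conv (S : point -> Prop) (x : point) : Prop :=
  exists (m : nat) (mu : 'I_m -> R) (p : 'I_m -> point),
    (forall k, 0 <= mu k) /\ \sum_(k < m) mu k = 1 /\ (forall k, S (p k)) /\
    (forall i j, x.1 i j = \sum_(k < m) mu k * (p k).1 i j) /\
    (forall e, x.2 e = \sum_(k < m) mu k * (p k).2 e).

(* A pair (I, j) with I subset of [d] and j : I -> {0..n} is encoded as a
   partial map jp : 'I_d -> option 'I_n.+1 with domain I. *)
Definition pmap := {ffun 'I_d -> option 'I_n.+1}.
Definition pdom (jp : pmap) : {set 'I_d} := [set i | jp i != None].
Definition pextends (jp' jp : pmap) : bool :=
  [forall i, (jp i != None) ==> (jp' i == jp i)].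

Definition RLT_feasible (y : pmap -> R) (x : point) : Prop :=
  y [ffun _ => None] = 1 /\
  (forall (i : 'I_d) (k : 'I_n.+1),
      y [ffun i' => if i' == i then Some k else None] = x.1 i k) /\
  (forall j : Eidx, x.2 j = y [ffun i => Some (j i)]) /\
  (forall j : Eidx, 0 <= y [ffun i => Some (j i)]) /\
  (* factor-product constraints for proper subsets I *)
  (forall jp : pmap, pdom jp != setT ->
     \sum_(jp' : pmap | pextends jp' jp)
        (-1) ^+ #|pdom jp' :\: pdom jp| * y jp' = 0).

Definition projRLT (x : point) : Prop := exists y : pmap -> R, RLT_feasible y x.

Definition Rset (x : point) : Prop :=
  (forall j : Eidx, 0 <= x.2 j) /\ \sum_(j : Eidx) x.2 j = 1 /\
  (forall (i : 'I_d) (j : Eidx), x.1 i (j i) = \sum_(p : Eidx | p i == j i) x.2 p).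

End RLT.

(* A point (lambda, w) of R is the convex combination, with weights w_p, of
   the points of M^Lambda in which every lambda_i is the unit vector at p_i;
   conversely M^Lambda lies in R because the marginals of a product of
   probability vectors are its factors, and R is convex.
   For the RLT relaxation, lift w to y_(I,j) := sum of the w_p over the p
   agreeing with j on I. The constraint at (I,j) is then a sum over p of w_p
   times the signed count of the I' between I and [d] on which p agrees with j;
   toggling one block outside I pairs these I' with opposite signs, so every
   constraint holds. Conversely, the constraint at a proper (I,j) expresses
   y_(I,j) through variables of larger support, so a feasible y is determined
   by the w_p = y_([d],p) and must be this lift; its single-block and empty-set
   values give the equations of R. *)

From Pilot Require Import Defs.
From mathcomp Require Import all_boot all_order all_algebra.
Import GRing.Theory Num.Theory.
Set Implicit Arguments.
Unset Strict Implicit.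
Unset Printing Implicit Defensive.
Local Open Scope ring_scope.

Section PartialMaps.
Variables d n : nat.
Local Notation E := (Eidx d n).
Local Notation P := (Defs.pmap d n).

Definition pfull (e : E) : P := [ffun i => Some (e i)].

Definition psingle (i : 'I_d) (k : 'I_n.+1) : P :=
  [ffun i' => if i' == i then Some k else None].

Lemma pextendsxx (jp : P) : pextends jp jp.
Proof. by apply/forallP => i; apply/implyP. Qed.

Lemma pextends_pfull (e e' : E) : pextends (pfull e) (pfull e') = (e == e').
Proof.
apply/forallP/eqP => [ext | -> i]; last exact/implyP.
by apply/ffunP => i; move: (implyP (ext i)); rewrite !ffunE => /(_ isT)/eqP[].
Qed.

Lemma pextends_psingle (e : E) i k :
  pextends (pfull e) (psingle i k) = (e i == k).
Proof.
apply/forallP/eqP => [ext | eik i'].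
  by move: (implyP (ext i)); rewrite !ffunE eqxx => /(_ isT)/eqP[].
by rewrite !ffunE; case: (i' =P i) => [->|_]; rewrite ?eik eqxx.
Qed.

Lemma pextends_empty (jp : P) : pextends jp [ffun=> None].
Proof. by apply/forallP => i; rewrite ffunE. Qed.

Lemma pdomT_pfull (jp : P) :
  pdom jp = setT -> jp = pfull [ffun i => odflt ord0 (jp i)].
Proof.
move=> domT; apply/ffunP => i; rewrite !ffunE.
by have := in_setT i; rewrite -domT inE; case: (jp i).
Qed.

Lemma pextends_proper (jp' jp : P) :
  pextends jp' jp -> jp' != jp -> pdom jp \proper pdom jp'.
Proof.
move=> /forallP ext neq; have sub : pdom jp \subset pdom jp'.
  by apply/subsetP => i; rewrite !inE => jpi; rewrite (eqP (implyP (ext i) jpi)).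
rewrite properEneq sub andbT; apply: contra neq => /eqP dom_eq.
apply/eqP/ffunP => i; have := implyP (ext i).
have : (i \in pdom jp') = (i \in pdom jp) by rewrite dom_eq.
by rewrite !inE; case: (jp i) => [a|]; case: (jp' i) => [b|] //= _ /(_ isT)/eqP.
Qed.

Definition oswap (a : 'I_n.+1) (o : option 'I_n.+1) : option 'I_n.+1 :=
  if o is Some b then (if b == a then None else o) else Some a.

Lemma oswapK a : involutive (oswap a).
Proof.
case=> [b|] /=; last by rewrite eqxx.
by case: (b =P a) => [-> | /eqP/negbTE ba] /=; rewrite ?eqxx ?ba.
Qed.

Definition ptoggle (i0 : 'I_d) (a : 'I_n.+1) (jp : P) : P :=
  [ffun i => if i == i0 then oswap a (jp i) else jp i].

Lemma ptoggleK i0 a : involutive (ptoggle i0 a).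
Proof.
move=> jp; apply/ffunP => i; rewrite !ffunE.
by case: (i =P i0) => [->|] //; rewrite oswapK.
Qed.

Section Toggle.
Variables (jp : P) (e : E) (i0 : 'I_d).
Hypothesis jp_i0 : jp i0 = None.
Local Notation toggle := (ptoggle i0 (e i0)).

Lemma pextends_ptoggle_l (jp' : P) : pextends (toggle jp') jp = pextends jp' jp.
Proof.
apply: eq_forallb => i; rewrite ffunE.
by case: (i =P i0) => [->|]; rewrite ?jp_i0.
Qed.

Lemma pextends_ptoggle_r (jp' : P) :
  pextends (pfull e) (toggle jp') = pextends (pfull e) jp'.
Proof.
apply: eq_forallb => i; rewrite !ffunE; case: (i =P i0) => [->|] //=.
case: (jp' i0) => [b|] //=; last by rewrite eqxx.
by case: (b =P e i0) => [->|/eqP/negbTE be] /=; rewrite ?eqxx ?be.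
Qed.

Lemma pdom_ptoggle (jp' : P) : pextends (pfull e) jp' ->
  (i0 \in pdom (toggle jp')) = (i0 \notin pdom jp') /\
  pdom (toggle jp') :\ i0 = pdom jp' :\ i0.
Proof.
move=> /forallP ext; split.
  have := implyP (ext i0); rewrite !inE !ffunE eqxx.
  by case: (jp' i0) => [b|] //= /(_ isT)/eqP[<-]; rewrite eqxx.
by apply/setP => i; rewrite !inE ffunE; case: (i =P i0).
Qed.

End Toggle.
End PartialMaps.

Section Lift.
Variables (R : realFieldType) (d n : nat).
Local Notation E := (Eidx d n).
Local Notation P := (Defs.pmap d n).
Local Notation pt := (point R d n).

Definition psign (jp' jp : P) : R := (-1) ^+ #|pdom jp' :\: pdom jp|.

Lemma psign_ptoggle (jp jp' : P) (e : E) i0 : jp i0 = None ->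
  pextends (pfull e) jp' -> psign (ptoggle i0 (e i0) jp') jp = - psign jp' jp.
Proof.
move=> jp_i0 ext; have [in_i0 off_i0] := pdom_ptoggle i0 ext.
have i0_dom : i0 \notin pdom jp by rewrite inE jp_i0.
rewrite /psign (cardsD1 i0) [in RHS](cardsD1 i0) !in_setD i0_dom in_i0 /=.
have -> : pdom (ptoggle i0 (e i0) jp') :\: pdom jp :\ i0 =
          pdom jp' :\: pdom jp :\ i0.
  by rewrite !setDDl !(setUC (pdom jp)) -!setDDl off_i0.
by case: (i0 \in pdom jp'); rewrite !exprD ?expr1 ?expr0 ?mulN1r ?mul1r ?opprK.
Qed.

(* [ptoggle i0 (e i0)], for [i0] outside the domain of [jp], is a sign-reversing
   involution of the interval between [jp] and [pfull e]. *)
Lemma sum_psign_interval (jp : P) (e : E) : pdom jp != setT ->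
  \sum_(jp' | pextends jp' jp && pextends (pfull e) jp') psign jp' jp = 0.
Proof.
rewrite -properT => /properP[_ [i0 _]]; rewrite inE negbK => /eqP jp_i0.
set S := \sum_(_ | _) _; have : S = - S.
  rewrite {1}/S (reindex_inj (inv_inj (ptoggleK i0 (e i0)))) /= -sumrN.
  apply: eq_big => jp'; first by rewrite pextends_ptoggle_l // pextends_ptoggle_r.
  by rewrite pextends_ptoggle_r => /andP[_ ext]; rewrite psign_ptoggle.
by move/eqP; rewrite -addr_eq0 -mulr2n mulrn_eq0 => /= /eqP.
Qed.

Definition rlt_lift (x : pt) (jp : P) : R :=
  \sum_(e : E | pextends (pfull e) jp) x.2 e.

Lemma rlt_lift_pfull x e : rlt_lift x (pfull e) = x.2 e.
Proof.
by rewrite /rlt_lift (eq_bigl _ _ (fun e' => pextends_pfull e' e)) big_pred1_eq.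
Qed.

Lemma rlt_lift_psingle x i k :
  rlt_lift x (psingle i k) = \sum_(e : E | e i == k) x.2 e.
Proof. by apply: eq_bigl => e; rewrite pextends_psingle. Qed.

Lemma rlt_lift_empty x : rlt_lift x [ffun=> None] = \sum_(e : E) x.2 e.
Proof. by apply: eq_bigl => e; rewrite pextends_empty. Qed.

Lemma rlt_lift_alt_sum x (jp : P) : pdom jp != setT ->
  \sum_(jp' | pextends jp' jp) psign jp' jp * rlt_lift x jp' = 0.
Proof.
move=> jp_proper; under eq_bigr => jp' _ do rewrite /rlt_lift big_distrr.
rewrite (exchange_big_dep xpredT) //=; apply: big1 => e _.
by rewrite -mulr_suml sum_psign_interval ?mul0r.
Qed.

Lemma sum_psign_diag (f : P -> R) (jp : P) :
  \sum_(jp' | pextends jp' jp) psign jp' jp * f jp' =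
  f jp + \sum_(jp' | pextends jp' jp && (jp' != jp)) psign jp' jp * f jp'.
Proof. by rewrite (bigD1 jp) ?pextendsxx //= /psign setDv cards0 mul1r. Qed.

Lemma RLT_feasible_lift (y : P -> R) (x : pt) :
  RLT_feasible y x -> y =1 rlt_lift x.
Proof.
case=> _ [_ [yw [_ yalt]]] jp.
(* The constraint at a proper [jp] determines [y jp] from the values on strict
   extensions of [jp]: induct on the size of the complement of its domain. *)
have [k] := ubnP #|~: pdom jp|; elim: k jp => // k IH jp /ltnSE le_k.
have [domT | proper] := eqVneq (pdom jp) setT.
  by rewrite (pdomT_pfull domT) rlt_lift_pfull yw.
have sum_eq :
    \sum_(jp' | pextends jp' jp && (jp' != jp)) psign jp' jp * y jp' =
    \sum_(jp' | pextends jp' jp && (jp' != jp)) psign jp' jp * rlt_lift x jp'.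
  apply: eq_bigr => jp' /andP[ext neq]; congr (_ * _); apply: IH.
  by apply: leq_trans le_k; rewrite proper_card // properC pextends_proper.
have := yalt jp proper; rewrite sum_psign_diag sum_eq => /eqP.
rewrite addr_eq0 => /eqP ->; have := rlt_lift_alt_sum x proper.
by rewrite sum_psign_diag => /eqP; rewrite addr_eq0 => /eqP ->.
Qed.

Lemma Rset_marginal (x : pt) : Rset x ->
  forall i k, x.1 i k = \sum_(e : E | e i == k) x.2 e.
Proof. by case=> _ [_ marg] i k; have := marg i [ffun=> k]; rewrite ffunE. Qed.

Lemma Rset_RLT_feasible (x : pt) : Rset x -> RLT_feasible (rlt_lift x) x.
Proof.
move=> xR; have [w_ge0 [w_sum _]] := xR.
split; first by rewrite rlt_lift_empty w_sum.
split; first by move=> i k; rewrite rlt_lift_psingle Rset_marginal.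
split; first by move=> e; rewrite rlt_lift_pfull.
split; first by move=> e; rewrite rlt_lift_pfull w_ge0.
exact: rlt_lift_alt_sum.
Qed.

Lemma RLT_feasible_Rset (y : P -> R) (x : pt) : RLT_feasible y x -> Rset x.
Proof.
move=> feas; have lift := RLT_feasible_lift feas.
case: feas => y_empty [y_single [yw [y_ge0 _]]].
split; first by move=> e; rewrite yw y_ge0.
split; first by rewrite -rlt_lift_empty -lift y_empty.
by move=> i e; rewrite -y_single lift rlt_lift_psingle.
Qed.

Lemma projRLT_Rset (x : pt) : projRLT x <-> Rset x.
Proof.
split; first by case=> y; apply: RLT_feasible_Rset.
by move=> xR; exists (rlt_lift x); apply: Rset_RLT_feasible.
Qed.

Lemma sum_prod_simplex (lam : 'I_d -> 'I_n.+1 -> R) : in_Lambda lam ->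
  \sum_(e : E) \prod_i lam i (e i) = 1.
Proof.
by move=> lamL; rewrite -bigA_distr_bigA big1 // => i _; apply: (lamL i).2.
Qed.

Lemma marginal_prod_simplex (lam : 'I_d -> 'I_n.+1 -> R) i k : in_Lambda lam ->
  \sum_(e : E | e i == k) \prod_i' lam i' (e i') = lam i k.
Proof.
move=> lamL.
pose F i' k' := if i' == i then (k' == k)%:R * lam i' k' else lam i' k'.
have -> : lam i k = \prod_i' \sum_k' F i' k'.
  rewrite (bigD1 i) //= [X in _ * X]big1 => [|i' ne]; last first.
    by rewrite /F (negbTE ne) (lamL i').2.
  rewrite /F eqxx mulr1 (bigD1 k) //= eqxx mul1r big1 ?addr0 // => k' ne.
  by rewrite (negbTE ne) mul0r.
rewrite bigA_distr_bigA big_mkcond /=; apply: eq_bigr => e _.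
rewrite (bigD1 i) //= [in RHS](bigD1 i) //= {1}/F eqxx.
rewrite [in RHS](eq_bigr (fun i' => lam i' (e i'))) => [|i' /negbTE ne].
  by case: (e i == k); rewrite ?mul1r ?mul0r.
by rewrite /F ne.
Qed.

Lemma MLambda_Rset (x : pt) : MLambda x -> Rset x.
Proof.
case=> lamL w_prod; split; [|split].
- by move=> e; rewrite w_prod prodr_ge0 // => i _; apply: (lamL i).1.
- by under eq_bigr => e _ do rewrite w_prod; apply: sum_prod_simplex.
- move=> i e; under eq_bigr => p _ do rewrite w_prod.
  by rewrite marginal_prod_simplex.
Qed.

Lemma conv_sub_Rset (S : pt -> Prop) (x : pt) :
  (forall z, S z -> Rset z) -> conv S x -> Rset x.
Proof.
move=> SR [m [mu [p [mu_ge0 [mu_sum [pS [x1 x2]]]]]]]; have pR k := SR _ (pS k).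
split; [|split].
- by move=> e; rewrite x2 sumr_ge0 // => k _; rewrite mulr_ge0 // (pR k).1.
- rewrite (eq_bigr _ (fun e _ => x2 e)) exchange_big /= -mu_sum.
  by apply: eq_bigr => k _; rewrite -big_distrr /= (pR k).2.1 mulr1.
- move=> i e; rewrite x1 (eq_bigr _ (fun e' _ => x2 e')) exchange_big /=.
  by apply: eq_bigr => k _; rewrite (pR k).2.2 big_distrr.
Qed.

Definition vertex (e : E) : pt :=
  (fun i k => (e i == k)%:R, fun e' => (e' == e)%:R).

Lemma vertex_MLambda (e : E) : MLambda (vertex e).
Proof.
split=> [i|e'] /=.
  split=> [k|]; first exact: ler0n.
  rewrite (bigD1 (e i)) //= eqxx big1 ?addr0 // => k /negbTE.
  by rewrite eq_sym => ->.
have [->|ne] := eqVneq e' e; first by rewrite big1 // => i _; rewrite eqxx.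
have /existsP[i ne_i] : [exists i, e' i != e i].
  apply: contraNT ne => /existsPn eq_i.
  by apply/eqP/ffunP => i; apply/eqP/negbNE/eq_i.
by rewrite (bigD1 i) //= eq_sym (negbTE ne_i) mul0r.
Qed.

Lemma Rset_conv_MLambda (x : pt) : Rset x -> conv (@MLambda R d n) x.
Proof.
move=> xR; have [w_ge0 [w_sum _]] := xR.
have sum_enum (F : E -> R) : \sum_(k < #|E|) F (enum_val k) = \sum_e F e.
  by rewrite -(big_enum_val F); apply: eq_bigl => e; rewrite inE.
exists #|E|, (fun k => x.2 (enum_val k)), (fun k => vertex (enum_val k)).
split; first by move=> k; apply: w_ge0.
split; first by rewrite sum_enum.
split; first by move=> k; apply: vertex_MLambda.
split=> [i k | e].
- rewrite (sum_enum (fun e => x.2 e * (vertex e).1 i k)) Rset_marginal //.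
  by rewrite big_mkcond; apply: eq_bigr => e _; rewrite mulr_natr mulrb.
- rewrite (sum_enum (fun e' => x.2 e' * (vertex e').2 e)) (bigD1 e) //= eqxx.
  rewrite mulr1 big1 ?addr0 // => e' /negbTE.
  by rewrite eq_sym => ->; rewrite mulr0.
Qed.

Lemma conv_MLambda_Rset (x : pt) : conv (@MLambda R d n) x <-> Rset x.
Proof.
by split; [apply: conv_sub_Rset MLambda_Rset | apply: Rset_conv_MLambda].
Qed.

End Lift.

Theorem theorem4p6 (R : realFieldType) (d n : nat) (hd : (0 < d)%N) (hn : (0 < n)%N) :
  forall x : point R d n,
    (conv (@MLambda R d n) x <-> projRLT x) /\ (projRLT x <-> Rset x).
Proof.
by move=> x; have := conv_MLambda_Rset x; have := projRLT_Rset x; tauto.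
Qed.
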